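(* Let $G$ be a countable group with a subgroup $\Gamma$ of index $m$ and a subgroup $H\lhd\Gamma$ of cardinality $d$ such that $\Gamma/H$ is abelian. Then for every finitely additive left-invariant mean $\mu$ on $G$ we have $\textup{dc}_\mu(G)\ge\frac{1}{m^2d}$. Moreover, if $G$ is finitely generated and $M$ is a sequence of probability measures on $G$ that measures index uniformly then $\textup{dc}_M(G)\ge\frac{1}{m^2d}$.
   Context: A finitely additive left-invariant mean is a positive normalised linear functional $\int\cdot\,d\mu$ on $\ell^\infty(G)$ invariant under $f\mapsto f(g^{-1}\cdot)$; $\mu(X)=\int1_X\,d\mu$; product mean $\int f\,d(\mu\times\mu)=\int_x\int_y f(x,y)\,d\mu(x)\,d\mu(y)$; $\textup{dc}_\mu(G)=(\mu\times\mu)(\{(x,y):xy=yx\})$. A sequence $M=(\mu_n)$ of probability measures measures index uniformly if $\mu_n(xH)\to1/[G:H]$ uniformly over $x\in G$ and subgroups $H$ (with $1/[G:H]=0$ for infinite index), and $\textup{dc}_M(G)=\limsup_n\textup{dc}_{\mu_n}(G)$ where $\textup{dc}_{\mu_n}(G)=(\mu_n\times\mu_n)(\{(x,y):xy=yx\})$. *)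

From Stdlib Require Import Reals List ClassicalDescription ClassicalEpsilon.
From Coquelicot Require Import Coquelicot.
Import ListNotations.
Open Scope R_scope.

Record group := Group {
  carrier :> Type;
  gmul : carrier -> carrier -> carrier;
  gone : carrier;
  ginv : carrier -> carrier;
  gmulA : forall x y z, gmul x (gmul y z) = gmul (gmul x y) z;
  gmul1l : forall x, gmul gone x = x;
  gmulVl : forall x, gmul (ginv x) x = gone
}.

Section Defs.
Variable G : group.

Definition countable_group : Prop :=
  exists f : G -> nat, forall x y, f x = f y -> x = y.

Definition is_subgroup (H : G -> Prop) : Prop :=
  H (gone G) /\ (forall x y, H x -> H y -> H (gmul G x y)) /\
  (forall x, H x -> H (ginv G x)).

Definition normal_in (H Gam : G -> Prop) : Prop :=
  is_subgroup H /\ is_subgroup Gam /\ (forall h, H h -> Gam h) /\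
  (forall g h, Gam g -> H h -> H (gmul G (gmul G (ginv G g) h) g)).

(* Gam / H is abelian: xyH = yxH for all x y in Gam *)
Definition quotient_abelian (Gam H : G -> Prop) : Prop :=
  forall x y, Gam x -> Gam y ->
    H (gmul G (ginv G (gmul G x y)) (gmul G y x)).

Definition has_card (H : G -> Prop) (d : nat) : Prop :=
  exists l : list G, NoDup l /\ length l = d /\ (forall x, H x <-> In x l).

Definition lcoset (x : G) (H : G -> Prop) : G -> Prop :=
  fun y => exists h, H h /\ y = gmul G x h.

Definition is_index (H : G -> Prop) (k : nat) : Prop :=
  exists l : list G, length l = k /\
    (forall i j, (i < k)%nat -> (j < k)%nat -> i <> j ->
       ~ H (gmul G (ginv G (nth i l (gone G))) (nth j l (gone G)))) /\
    (forall g, exists x, In x l /\ lcoset x H g).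

(* 1/[G:H], with the convention 1/[G:H] = 0 when the index is infinite *)
Definition inv_index (H : G -> Prop) : R :=
  match excluded_middle_informative (exists k, is_index H k) with
  | left e => / INR (proj1_sig (constructive_indefinite_description _ e))
  | right _ => 0
  end.

Definition finitely_generated : Prop :=
  exists S : list G, forall K, is_subgroup K -> (forall s, In s S -> K s) ->
    forall g, K g.

End Defs.

Definition ind {T : Type} (X : T -> Prop) (x : T) : R :=
  if excluded_middle_informative (X x) then 1 else 0.

Definition bounded {T : Type} (f : T -> R) : Prop :=
  exists B, forall x, Rabs (f x) <= B.

(* It is given as a
   map on all real functions; only its values on bounded functions matter. *)
Definition is_left_invariant_mean (G : group) (mu : (G -> R) -> R) : Prop :=
  (forall f g, bounded f -> bounded g -> mu (fun x => f x + g x) = mu f + mu g) /\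
  (forall (c : R) f, bounded f -> mu (fun x => c * f x) = c * mu f) /\
  (forall f, bounded f -> (forall x, 0 <= f x) -> 0 <= mu f) /\
  mu (fun _ => 1) = 1 /\
  (forall (g : G) f, bounded f -> mu (fun x => f (gmul G (ginv G g) x)) = mu f).

Definition commuting (G : group) (x y : G) : Prop := gmul G x y = gmul G y x.

Definition dc_mean (G : group) (mu : (G -> R) -> R) : R :=
  mu (fun x => mu (fun y => ind (commuting G x) y)).

Definition fsums {T : Type} (p : T -> R) (A : T -> Prop) : R -> Prop :=
  fun r => exists l : list T, NoDup l /\ (forall x, In x l -> A x) /\
    r = fold_right (fun x s => p x + s) 0 l.

(* measure of A under the (discrete) measure with point masses p *)
Definition mass {T : Type} (p : T -> R) (A : T -> Prop) : R :=
  real (Lub_Rbar (fsums p A)).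

Definition is_prob_measure {T : Type} (p : T -> R) : Prop :=
  (forall x, 0 <= p x) /\ is_lub (fsums p (fun _ => True)) 1.

Definition dc_prob (G : group) (p : G -> R) : R :=
  mass (fun z : G * G => p (fst z) * p (snd z))
       (fun z => commuting G (fst z) (snd z)).

Definition measures_index_uniformly (G : group) (M : nat -> G -> R) : Prop :=
  forall eps, 0 < eps -> exists N, forall n, (N <= n)%nat ->
    forall (x : G) (H : G -> Prop), is_subgroup G H ->
      Rabs (mass (M n) (lcoset G x H) - inv_index G H) < eps.

Definition dc_seq (G : group) (M : nat -> G -> R) : Rbar :=
  LimSup_seq (fun n => dc_prob G (M n)).

From Pilot Require Import Defs.
From Stdlib Require Import Reals List Lra Lia FunctionalExtensionality Classical ClassicalEpsilon.
From Coquelicot Require Import Coquelicot.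
Open Scope R_scope.

(* Fix x in Gam. Since Gam/H is abelian, y x y^-1 lies in xH for every y in Gam, so Gam is
   covered by the d sets {y | y x y^-1 = x h}, h in H, each contained in a single left coset
   of the centralizer C(x).  Hence any monotone, subadditive set function nu giving all left
   cosets of a subgroup the same size (a left-invariant mean, or asymptotically a sequence
   measuring index uniformly) satisfies nu(Gam) >= 1/m and nu(C(x)) >= nu(Gam)/d on Gam.
   Integrating nu(C(x)) over x in Gam bounds the density of commuting pairs below by
   nu(Gam)^2/d >= 1/(m^2 d). *)

Local Notation ind := Defs.ind.
Local Notation bounded := Defs.bounded.

Section GroupFacts.
Variable G : group.
Local Notation mul := (gmul G).
Local Notation inv := (ginv G).
Local Notation one := (gone G).

Lemma gmulV (x : G) : mul x (inv x) = one.
Proof.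
  rewrite <- (gmul1l G (mul x (inv x))), <- (gmulVl G (inv x)) at 1.
  rewrite <- gmulA, (gmulA G (inv x) x (inv x)), gmulVl, gmul1l.
  apply gmulVl.
Qed.

Lemma gmul1r (x : G) : mul x one = x.
Proof. rewrite <- (gmulVl G x), gmulA, gmulV. apply gmul1l. Qed.

Lemma gmulI (a b c : G) : mul a b = mul a c -> b = c.
Proof.
  intro E. rewrite <- (gmul1l G b), <- (gmul1l G c), <- (gmulVl G a), <- !gmulA, E.
  reflexivity.
Qed.

Lemma gmulKV (a b : G) : mul a (mul (inv a) b) = b.
Proof. rewrite gmulA, gmulV, gmul1l. reflexivity. Qed.

Lemma ginvK (x : G) : inv (inv x) = x.
Proof. apply (gmulI (inv x)). rewrite gmulV, gmulVl. reflexivity. Qed.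

Lemma ginvM (a b : G) : inv (mul a b) = mul (inv b) (inv a).
Proof.
  apply (gmulI (mul a b)). rewrite gmulV, <- gmulA, (gmulA G b), gmulV, gmul1l, gmulV.
  reflexivity.
Qed.

Lemma centralizer_subgroup (x : G) : is_subgroup G (commuting G x).
Proof.
  unfold commuting; repeat split.
  - rewrite gmul1l, gmul1r. reflexivity.
  - intros a b Ha Hb. rewrite gmulA, Ha, <- gmulA, Hb, gmulA. reflexivity.
  - intros a Ha. apply (gmulI a).
    rewrite gmulKV, gmulA, <- Ha, <- gmulA, gmulV, gmul1r. reflexivity.
Qed.

Lemma lcoset1_sub (K : G -> Prop) (y : G) : lcoset G one K y -> K y.
Proof. intros [h [Hh ->]]. rewrite gmul1l. exact Hh. Qed.

Definition conjugators (x z : G) : G -> Prop := fun y => mul y x = mul z y.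

Lemma conjugators_sub_lcoset (x z : G) :
  exists y0, forall y, conjugators x z y -> lcoset G y0 (commuting G x) y.
Proof.
  destruct (classic (exists y0, conjugators x z y0)) as [[y0 Hy0]|Hnone].
  - exists y0. intros y Hy. exists (mul (inv y0) y). split; [|rewrite gmulKV; reflexivity].
    apply (gmulI y0). unfold conjugators in *.
    rewrite (gmulA G y0 x), Hy0, (gmulA G y0 (mul (inv y0) y)), gmulKV, Hy, <- gmulA, gmulKV.
    reflexivity.
  - exists one. intros y Hy. exfalso. apply Hnone. exists y. exact Hy.
Qed.

Lemma conjugators_cover (Gam H : G -> Prop) (x y : G) :
  is_subgroup G Gam -> quotient_abelian G Gam H -> Gam x -> Gam y ->
  exists h, H h /\ conjugators x (mul x h) y.
Proof.
  intros (_ & _ & HGamV) Hab Hx Hy.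
  exists (mul (inv (mul (inv y) x)) (mul x (inv y))). split.
  - apply Hab; [apply HGamV|]; assumption.
  - unfold conjugators. rewrite ginvM, ginvK, !gmulA, gmulV, gmul1l, <- gmulA, gmulVl, gmul1r.
    reflexivity.
Qed.

Lemma card_pos (H : G -> Prop) (d : nat) : is_subgroup G H -> has_card G H d -> (1 <= d)%nat.
Proof.
  intros [H1 _] [l [_ [Hlen Hin]]]. apply Hin in H1.
  destruct l; [destruct H1|]. simpl in Hlen. lia.
Qed.

End GroupFacts.

Record is_submeasure {T : Type} (nu : (T -> Prop) -> R) : Prop := {
  submeasure_mono : forall S S', (forall y, S y -> S' y) -> nu S <= nu S';
  submeasure_union : forall S S', nu (fun y => S y \/ S' y) <= nu S + nu S';
  submeasure_empty : nu (fun _ => False) = 0 }.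

Lemma submeasure_cover_le {T A : Type} (nu : (T -> Prop) -> R) (l : list A)
    (P : A -> T -> Prop) (Q : T -> Prop) (c : R) :
  is_submeasure nu -> (forall a, nu (P a) <= c) ->
  (forall y, Q y -> exists a, In a l /\ P a y) -> nu Q <= INR (length l) * c.
Proof.
  intros [mono union empty] Hc. revert Q.
  induction l as [|a l IH]; intros Q Hcov.
  - simpl. rewrite Rmult_0_l, <- empty. apply mono.
    intros y Hy. destruct (Hcov y Hy) as [? [[] _]].
  - set (Q' := fun y => exists a', In a' l /\ P a' y).
    assert (HQ' : nu Q' <= INR (length l) * c) by (apply IH; intros y Hy; exact Hy).
    assert (HQ : nu Q <= nu (fun y => P a y \/ Q' y)).
    { apply mono. intros y Hy. destruct (Hcov y Hy) as [a' [[<-|Ha'] HP]]; [left|right];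
        [exact HP|exists a'; split; assumption]. }
    specialize (union (P a) Q'). specialize (Hc a).
    simpl length. rewrite S_INR. lra.
Qed.

Section SubmeasureBounds.
Variables (G : group) (nu : (G -> Prop) -> R).
Hypothesis Hnu : is_submeasure nu.

Lemma submeasure_le_index (Gam : G -> Prop) (m : nat) (c : R) :
  is_index G Gam m -> (forall x, nu (lcoset G x Gam) <= c) ->
  nu (fun _ => True) <= INR m * c.
Proof.
  intros [l [Hlen [_ Hcov]]] Hc. rewrite <- Hlen.
  apply (submeasure_cover_le nu l (fun x => lcoset G x Gam)); [exact Hnu|exact Hc|].
  intros y _. apply Hcov.
Qed.

Lemma submeasure_le_centralizer (Gam H : G -> Prop) (d : nat) (x : G) (c : R) :
  is_subgroup G Gam -> quotient_abelian G Gam H -> has_card G H d -> Gam x ->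
  (forall y, nu (lcoset G y (commuting G x)) <= c) -> nu Gam <= INR d * c.
Proof.
  intros HGam Hab [lH [_ [Hlen HlH]]] Hx Hc. rewrite <- Hlen.
  apply (submeasure_cover_le nu lH (fun h => conjugators G x (gmul G x h))); [exact Hnu| |].
  - intro h. destruct (conjugators_sub_lcoset G x (gmul G x h)) as [y0 Hy0].
    eapply Rle_trans; [apply (submeasure_mono _ Hnu), Hy0|apply Hc].
  - intros y Hy. destruct (conjugators_cover G Gam H x y HGam Hab Hx Hy) as [h [Hh Hconj]].
    exists h. split; [apply HlH, Hh|exact Hconj].
Qed.

End SubmeasureBounds.

Lemma ind_bounds {T : Type} (S : T -> Prop) (y : T) : 0 <= ind S y <= 1.
Proof. unfold Defs.ind. destruct (excluded_middle_informative (S y)); lra. Qed.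

Lemma ind_bounded {T : Type} (S : T -> Prop) : bounded (ind S).
Proof. exists 1. intro y. pose proof (ind_bounds S y). rewrite Rabs_right; lra. Qed.

Lemma ind_mono {T : Type} (S S' : T -> Prop) (y : T) :
  (forall z, S z -> S' z) -> ind S y <= ind S' y.
Proof.
  intro Hsub. unfold Defs.ind.
  destruct (excluded_middle_informative (S y)) as [Hy|];
  destruct (excluded_middle_informative (S' y)) as [|Hy']; try lra.
  exfalso. apply Hy', Hsub, Hy.
Qed.

Lemma ind_union_le {T : Type} (S S' : T -> Prop) (y : T) :
  ind (fun z => S z \/ S' z) y <= ind S y + ind S' y.
Proof.
  unfold Defs.ind.
  destruct (excluded_middle_informative (S y));
  destruct (excluded_middle_informative (S' y));
  destruct (excluded_middle_informative (S y \/ S' y)); try lra; tauto.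
Qed.

Lemma ind_True {T : Type} : ind (fun _ : T => True) = fun _ => 1.
Proof.
  apply functional_extensionality. intro y. unfold Defs.ind.
  destruct (excluded_middle_informative True); [reflexivity|tauto].
Qed.

Lemma bounded_const {T : Type} (c : R) : bounded (fun _ : T => c).
Proof. exists (Rabs c). intro. lra. Qed.

Lemma bounded_plus {T : Type} (f g : T -> R) :
  bounded f -> bounded g -> bounded (fun x => f x + g x).
Proof.
  intros [B HB] [B' HB']. exists (B + B'). intro x.
  eapply Rle_trans; [apply Rabs_triang|]. specialize (HB x). specialize (HB' x). lra.
Qed.

Lemma bounded_scal {T : Type} (c : R) (f : T -> R) : bounded f -> bounded (fun x => c * f x).
Proof.
  intros [B HB]. exists (Rabs c * B). intro x. rewrite Rabs_mult.
  apply Rmult_le_compat_l; [apply Rabs_pos|apply HB].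
Qed.

Section Means.
Variables (G : group) (mu : (G -> R) -> R).
Hypothesis Hmu : is_left_invariant_mean G mu.

Lemma mean_zero : mu (fun _ => 0) = 0.
Proof.
  destruct Hmu as (_ & Hscal & _).
  replace (fun _ : G => 0) with (fun _ : G => 0 * 1) by (apply functional_extensionality; intro; ring).
  rewrite Hscal by apply bounded_const. ring.
Qed.

Lemma mean_mono (f g : G -> R) :
  bounded f -> bounded g -> (forall x, f x <= g x) -> mu f <= mu g.
Proof.
  intros Hf Hg Hfg. destruct Hmu as (Hadd & Hscal & Hpos & _).
  assert (Hdiff : bounded (fun x => g x + -1 * f x)) by (apply bounded_plus, bounded_scal; assumption).
  assert (Hg_eq : g = fun x => f x + (g x + -1 * f x))
    by (apply functional_extensionality; intro; ring).
  assert (0 <= mu (fun x => g x + -1 * f x))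
    by (apply Hpos; [exact Hdiff|intro x; specialize (Hfg x); lra]).
  rewrite Hg_eq, Hadd by assumption. lra.
Qed.

Lemma mean_submeasure : is_submeasure (fun S => mu (ind S)).
Proof.
  pose proof Hmu as (Hadd & _ & _ & _).
  split.
  - intros S S' Hsub. apply mean_mono; try apply ind_bounded. intro y. apply ind_mono, Hsub.
  - intros S S'. rewrite <- Hadd by apply ind_bounded.
    apply mean_mono; [apply ind_bounded|apply bounded_plus; apply ind_bounded|].
    intro y. apply ind_union_le.
  - rewrite <- mean_zero. f_equal. apply functional_extensionality. intro y.
    unfold Defs.ind. destruct (excluded_middle_informative False); [contradiction|reflexivity].
Qed.

Lemma mean_lcoset (x : G) (K : G -> Prop) : mu (ind (lcoset G x K)) = mu (ind K).
Proof.
  destruct Hmu as (_ & _ & _ & _ & Hinv).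
  rewrite <- (Hinv x (ind K)) by apply ind_bounded. f_equal.
  apply functional_extensionality. intro y. unfold Defs.ind.
  destruct (excluded_middle_informative (K (gmul G (ginv G x) y))) as [HK|HK];
  destruct (excluded_middle_informative (lcoset G x K y)) as [[h [Hh ->]]|Hy]; try reflexivity.
  - exfalso. apply Hy. exists (gmul G (ginv G x) y). split; [exact HK|]. rewrite gmulKV. reflexivity.
  - exfalso. apply HK. rewrite gmulA, gmulVl, gmul1l. exact Hh.
Qed.

Lemma dc_mean_ge_mul (Gam : G -> Prop) (b : R) :
  0 <= b -> (forall x, Gam x -> b <= mu (ind (commuting G x))) ->
  mu (ind Gam) * b <= dc_mean G mu.
Proof.
  intros Hb Hc. pose proof Hmu as (_ & Hscal & Hpos & Hone & _).
  assert (Hfib : forall x, 0 <= mu (ind (commuting G x)) <= 1).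
  { intro x. split.
    - apply Hpos; [apply ind_bounded|]. intro. apply ind_bounds.
    - rewrite <- Hone. apply mean_mono; [apply ind_bounded|apply bounded_const|].
      intro. apply ind_bounds. }
  rewrite Rmult_comm, <- Hscal by apply ind_bounded.
  change (dc_mean G mu) with (mu (fun x => mu (ind (commuting G x)))).
  apply mean_mono; [apply bounded_scal, ind_bounded| |].
  - exists 1. intro x. specialize (Hfib x). rewrite Rabs_right; lra.
  - intro x. unfold Defs.ind at 1.
    destruct (excluded_middle_informative (Gam x)) as [Hx|]; [specialize (Hc x Hx); lra|].
    specialize (Hfib x). lra.
Qed.

End Means.

Definition lsum {A : Type} (f : A -> R) (l : list A) : R :=
  fold_right (fun a s => f a + s) 0 l.

Lemma lsum_nonneg {A : Type} (f : A -> R) (l : list A) :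
  (forall a, 0 <= f a) -> 0 <= lsum f l.
Proof. intro Hf. induction l as [|a l IH]; simpl; [lra|]. specialize (Hf a). lra. Qed.

Lemma lsum_app {A : Type} (f : A -> R) (l1 l2 : list A) :
  lsum f (l1 ++ l2) = lsum f l1 + lsum f l2.
Proof. induction l1 as [|a l1 IH]; simpl; [ring|]. rewrite IH. ring. Qed.

Lemma lsum_filter_split {A : Type} (f : A -> R) (b : A -> bool) (l : list A) :
  lsum f l = lsum f (filter b l) + lsum f (filter (fun a => negb (b a)) l).
Proof. induction l as [|a l IH]; simpl; [ring|]. destruct (b a); simpl; rewrite IH; ring. Qed.

Lemma lsum_map_pair {A B : Type} (f : A -> R) (g : B -> R) (x : A) (l : list B) :
  lsum (fun z => f (fst z) * g (snd z)) (map (fun y => (x, y)) l) = f x * lsum g l.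
Proof. induction l as [|y l IH]; simpl; [ring|]. rewrite IH. ring. Qed.

Lemma lsum_list_prod {A B : Type} (f : A -> R) (g : B -> R) (X : list A) (Y : list B) :
  lsum (fun z => f (fst z) * g (snd z)) (list_prod X Y) = lsum f X * lsum g Y.
Proof.
  induction X as [|x X IH]; simpl; [ring|].
  rewrite lsum_app, lsum_map_pair, IH. ring.
Qed.

Lemma lsum_remove {A : Type} (f : A -> R) (l : list A) (a : A)
    (dec : forall x y : A, {x = y} + {x <> y}) :
  (forall x, 0 <= f x) -> In a l -> f a + lsum f (remove dec a l) <= lsum f l.
Proof.
  intros Hf Hin. induction l as [|b l IH]; [destruct Hin|]. simpl.
  destruct (dec a b) as [<-|Hne].
  - assert (lsum f (remove dec a l) <= lsum f l); [|lra].
    clear IH Hin. induction l as [|c l IH]; simpl; [lra|].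
    destruct (dec a c); simpl; specialize (Hf c); lra.
  - destruct Hin as [->|Hin]; [contradiction|]. simpl. specialize (IH Hin). lra.
Qed.

Lemma lsum_incl {A : Type} (f : A -> R) (l l' : list A) :
  (forall x, 0 <= f x) -> NoDup l -> incl l l' -> lsum f l <= lsum f l'.
Proof.
  intros Hf Hnd. revert l'. induction Hnd as [|a l Ha Hnd IH]; intros l' Hincl.
  - apply lsum_nonneg, Hf.
  - pose (dec := fun x y : A => excluded_middle_informative (x = y)).
    eapply Rle_trans; [|apply (lsum_remove f l' a dec Hf), Hincl; left; reflexivity].
    simpl. apply Rplus_le_compat_l, IH. intros y Hy.
    apply in_in_remove; [intros ->; contradiction|]. apply Hincl. right. exact Hy.
Qed.

Section Mass.
Variables (T : Type) (p : T -> R).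

(* [mass] is [real] of a supremum, hence junk ([0]) when finite sums are unbounded. *)
Definition sums_le1 : Prop := forall A r, fsums p A r -> r <= 1.

Hypothesis Hp : sums_le1.

Lemma fsums_nil (A : T -> Prop) : fsums p A 0.
Proof. exists nil. repeat split; [constructor|intros x []]. Qed.

Lemma Lub_fsums_finite (A : T -> Prop) : Lub_Rbar (fsums p A) = Finite (mass p A).
Proof.
  unfold mass. destruct (Lub_Rbar_correct (fsums p A)) as [Hub Hleast].
  assert (Hle1 : Rbar_le (Lub_Rbar (fsums p A)) 1) by (apply Hleast; intros r Hr; apply (Hp A r Hr)).
  specialize (Hub 0 (fsums_nil A)).
  destruct (Lub_Rbar (fsums p A)); simpl in *; [reflexivity|contradiction|contradiction].
Qed.

Lemma mass_ge (A : T -> Prop) (r : R) : fsums p A r -> r <= mass p A.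
Proof.
  intro Hr. destruct (Lub_Rbar_correct (fsums p A)) as [Hub _].
  specialize (Hub r Hr). rewrite Lub_fsums_finite in Hub. exact Hub.
Qed.

Lemma mass_le (A : T -> Prop) (c : R) : (forall r, fsums p A r -> r <= c) -> mass p A <= c.
Proof.
  intro Hc. destruct (Lub_Rbar_correct (fsums p A)) as [_ Hleast].
  specialize (Hleast (Finite c) Hc). rewrite Lub_fsums_finite in Hleast. exact Hleast.
Qed.

Lemma mass_approx (A : T -> Prop) (e : R) : 0 < e ->
  exists l, NoDup l /\ (forall x, In x l -> A x) /\ mass p A - e < lsum p l.
Proof.
  intro He. apply NNPP. intro Hnone.
  assert (mass p A <= mass p A - e); [|lra].
  apply mass_le. intros r [l [Hnd [HlA ->]]].
  apply Rnot_lt_le. intro Hlt. apply Hnone. exists l. repeat split; assumption.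
Qed.

Lemma mass_submeasure : is_submeasure (mass p).
Proof.
  split.
  - intros S S' Hsub. apply mass_le. intros r [l [Hnd [HlS ->]]].
    apply mass_ge. exists l. repeat split; [exact Hnd|]. intros x Hx. apply Hsub, HlS, Hx.
  - intros S S'. apply mass_le. intros r [l [Hnd [HlS ->]]].
    set (inS := fun y => if excluded_middle_informative (S y) then true else false).
    change (lsum p l <= mass p S + mass p S'). rewrite (lsum_filter_split p inS).
    apply Rplus_le_compat; apply mass_ge;
      [exists (filter inS l)|exists (filter (fun a => negb (inS a)) l)];
      (repeat split; [apply NoDup_filter, Hnd|]); intros x Hx;
      apply filter_In in Hx as [Hx Hb]; unfold inS in Hb;
      destruct (excluded_middle_informative (S x)); try discriminate;
      [assumption|destruct (HlS x Hx); [contradiction|assumption]].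
  - apply Rle_antisym; [|apply mass_ge, fsums_nil].
    apply mass_le. intros r [[|x l] [_ [Hl ->]]]; [simpl; lra|].
    destruct (Hl x). left. reflexivity.
Qed.

End Mass.

Lemma prob_sums_le1 {T : Type} (p : T -> R) : is_prob_measure p -> sums_le1 T p.
Proof. intros [_ [Hub _]] A r [l [Hnd [_ ->]]]. apply Hub. exists l. repeat split; auto. Qed.

Lemma prob_mass_total {T : Type} (p : T -> R) : is_prob_measure p -> mass p (fun _ => True) = 1.
Proof.
  intro Hprob. pose proof (prob_sums_le1 p Hprob) as Hp. destruct Hprob as [_ [Hub Hleast]].
  apply Rle_antisym.
  - apply mass_le; [exact Hp|exact Hub].
  - apply Hleast. intros r Hr. apply mass_ge; assumption.
Qed.

Lemma prob_pair_sums_le1 {T : Type} (p : T -> R) :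
  is_prob_measure p -> sums_le1 (T * T) (fun z => p (fst z) * p (snd z)).
Proof.
  intros Hprob A r [l [Hnd [_ ->]]].
  pose proof (prob_sums_le1 p Hprob) as Hp. destruct Hprob as [Hnn _].
  pose (dec := fun x y : T => excluded_middle_informative (x = y)).
  set (X := nodup dec (map fst l)). set (Y := nodup dec (map snd l)).
  assert (HX : lsum p X <= 1) by (apply (Hp (fun _ => True)); exists X; repeat split; auto; apply NoDup_nodup).
  assert (HY : lsum p Y <= 1) by (apply (Hp (fun _ => True)); exists Y; repeat split; auto; apply NoDup_nodup).
  pose proof (lsum_nonneg p X Hnn). pose proof (lsum_nonneg p Y Hnn).
  change (lsum (fun z => p (fst z) * p (snd z)) l <= 1).
  apply Rle_trans with (lsum (fun z => p (fst z) * p (snd z)) (list_prod X Y)).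
  - apply lsum_incl; [intro; apply Rmult_le_pos; apply Hnn|exact Hnd|].
    intros [a b] Hab. apply in_prod; apply nodup_In;
      [change a with (fst (a, b))|change b with (snd (a, b))]; apply in_map, Hab.
  - rewrite lsum_list_prod. nra.
Qed.

Lemma lsum_pairs_ge {T : Type} (p : T -> R) (Rel : T -> T -> Prop) (b : R) (L : list T) :
  (forall x, 0 <= p x) -> NoDup L ->
  (forall x, In x L -> exists Lx, NoDup Lx /\ (forall y, In y Lx -> Rel x y) /\ b <= lsum p Lx) ->
  exists P, NoDup P /\ (forall z, In z P -> In (fst z) L /\ Rel (fst z) (snd z)) /\
    lsum p L * b <= lsum (fun z => p (fst z) * p (snd z)) P.
Proof.
  intros Hnn Hnd. induction Hnd as [|x L Hx Hnd IH]; intros Hfib.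
  - exists nil. split; [constructor|split; [intros z []|simpl; lra]].
  - destruct IH as [P [HPnd [HPin HPsum]]]; [intros y Hy; apply Hfib; right; exact Hy|].
    destruct (Hfib x (or_introl eq_refl)) as [Lx [HLxnd [HLxRel HLxsum]]].
    exists (map (fun y => (x, y)) Lx ++ P). split; [|split].
    + apply NoDup_app; [|exact HPnd|].
      * apply NoDup_map_NoDup_ForallPairs; [|exact HLxnd]. intros a c _ _ E. injection E. auto.
      * intros z Hz Hz'. apply in_map_iff in Hz as [y [<- _]].
        apply HPin in Hz' as [Hz' _]. contradiction.
    + intros z Hz. apply in_app_or in Hz as [Hz|Hz]; [|split; [right|]; apply HPin, Hz].
      apply in_map_iff in Hz as [y [<- Hy]]. split; [left; reflexivity|apply HLxRel, Hy].
    + rewrite lsum_app, lsum_map_pair. simpl.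
      assert (p x * b <= p x * lsum p Lx) by (apply Rmult_le_compat_l; [apply Hnn|exact HLxsum]).
      lra.
Qed.

Lemma mass_pair_ge {T : Type} (p : T -> R) (A : T -> Prop) (Rel : T -> T -> Prop) (b : R) :
  is_prob_measure p -> 0 <= b -> (forall x, A x -> b <= mass p (Rel x)) ->
  mass p A * b <= mass (fun z : T * T => p (fst z) * p (snd z)) (fun z => Rel (fst z) (snd z)).
Proof.
  intros Hprob Hb Hfib. pose proof (prob_sums_le1 p Hprob) as Hp.
  apply Rle_plus_epsilon. intros e He.
  set (delta := e / (b + 1)).
  assert (Hdelta : 0 < delta) by (apply Rdiv_lt_0_compat; lra).
  assert (Edelta : delta * (b + 1) = e) by (unfold delta; field; lra).
  destruct (mass_approx T p Hp A delta Hdelta) as [L [HLnd [HLA HLsum]]].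
  destruct (lsum_pairs_ge p Rel (b - delta) L) as [P [HPnd [HPin HPsum]]];
    [apply Hprob|exact HLnd| |].
  { intros x Hx. destruct (mass_approx T p Hp (Rel x) delta Hdelta) as [Lx [? [? ?]]].
    exists Lx. repeat split; try assumption. specialize (Hfib x (HLA x Hx)). lra. }
  assert (HPmass : lsum (fun z => p (fst z) * p (snd z)) P
                   <= mass (fun z : T * T => p (fst z) * p (snd z)) (fun z => Rel (fst z) (snd z))).
  { apply mass_ge; [apply prob_pair_sums_le1, Hprob|].
    exists P. repeat split; [exact HPnd|]. intros z Hz. apply HPin, Hz. }
  assert (HL1 : lsum p L <= 1) by (apply (Hp A); exists L; repeat split; assumption).
  (* lsum p L * (b - delta) >= (mass p A - delta) * b - delta, as 0 <= b and lsum p L <= 1 *)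
  nra.
Qed.

Lemma LimSup_seq_ge (u : nat -> R) (c : R) :
  (forall e, 0 < e -> exists N, forall n, (N <= n)%nat -> c - e <= u n) ->
  Rbar_le c (LimSup_seq u).
Proof.
  intro Hev.
  assert (Hlow : forall e, 0 < e -> Rbar_le (c - e) (LimSup_seq u)).
  { intros e He. rewrite <- (LimSup_seq_const (c - e)). apply LimSup_le, Hev, He. }
  destruct (LimSup_seq u) as [l| |]; simpl in *; [|exact I|exact (Hlow 1 Rlt_0_1)].
  apply Rle_plus_epsilon. intros e He. specialize (Hlow e He). lra.
Qed.

Section UniformSequence.
Variables (G : group) (M : nat -> G -> R).
Hypothesis HM : forall n, is_prob_measure (M n).
Hypothesis HU : measures_index_uniformly G M.

Lemma mass_near_inv_index (e : R) : 0 < e ->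
  exists N, forall n, (N <= n)%nat -> forall K, is_subgroup G K ->
    inv_index G K - e < mass (M n) K /\ forall x, mass (M n) (lcoset G x K) < inv_index G K + e.
Proof.
  intro He. destruct (HU e He) as [N HN]. exists N. intros n Hn K HK. split.
  - destruct (Rabs_def2 _ _ (HN n Hn (gone G) K HK)) as [_ Hlow].
    assert (mass (M n) (lcoset G (gone G) K) <= mass (M n) K); [|lra].
    apply (submeasure_mono _ (mass_submeasure G (M n) (prob_sums_le1 _ (HM n)))).
    apply lcoset1_sub.
  - intro x. destruct (Rabs_def2 _ _ (HN n Hn x K HK)) as [Hup _]. lra.
Qed.

Lemma le_mul_inv_index (K Q : G -> Prop) (k : nat) (q : R) :
  is_subgroup G K ->
  (forall n c, (forall x, mass (M n) (lcoset G x K) <= c) -> mass (M n) Q <= INR k * c) ->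
  (forall e, 0 < e -> exists N, forall n, (N <= n)%nat -> q - e <= mass (M n) Q) ->
  q <= INR k * inv_index G K.
Proof.
  intros HK Hbound Hq. apply Rle_plus_epsilon. intros e He.
  pose proof (pos_INR k) as Hk.
  set (eps := e / (INR k + 1)).
  assert (Heps : 0 < eps) by (apply Rdiv_lt_0_compat; lra).
  assert (Eeps : (INR k + 1) * eps = e) by (unfold eps; field; lra).
  destruct (mass_near_inv_index eps Heps) as [N1 HN1]. destruct (Hq eps Heps) as [N2 HN2].
  specialize (HN2 (Nat.max N1 N2) (Nat.le_max_r N1 N2)).
  destruct (HN1 (Nat.max N1 N2) (Nat.le_max_l N1 N2) K HK) as [_ Hup].
  assert (mass (M (Nat.max N1 N2)) Q <= INR k * (inv_index G K + eps))
    by (apply Hbound; intro x; apply Rlt_le, Hup).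
  nra.
Qed.

Lemma dc_seq_ge_mul (Gam : G -> Prop) (a b : R) :
  0 <= a -> 0 < b -> is_subgroup G Gam -> a <= inv_index G Gam ->
  (forall x, Gam x -> b <= inv_index G (commuting G x)) ->
  Rbar_le (a * b) (dc_seq G M).
Proof.
  intros Ha Hb HGam HaGam Hbx. apply LimSup_seq_ge. intros e He.
  set (delta := Rmin b (e / (a + b + 1))).
  assert (Hdelta : 0 < delta) by (apply Rmin_pos; [lra|apply Rdiv_lt_0_compat; lra]).
  assert (Hdelta_b : delta <= b) by apply Rmin_l.
  assert (Hdelta_e : delta * (a + b + 1) <= e).
  { apply (Rmult_le_reg_r (/ (a + b + 1))); [apply Rinv_0_lt_compat; lra|].
    rewrite Rmult_assoc, Rinv_r, Rmult_1_r by lra. apply Rmin_r. }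
  destruct (mass_near_inv_index delta Hdelta) as [N HN]. exists N. intros n Hn.
  assert (HmGam : a - delta <= mass (M n) Gam)
    by (destruct (HN n Hn Gam HGam) as [Hlow _]; lra).
  assert (Hpair := mass_pair_ge (M n) Gam (commuting G) (b - delta) (HM n) ltac:(lra)).
  assert (Hdc : mass (M n) Gam * (b - delta) <= dc_prob G (M n)).
  { apply Hpair. intros x Hx. specialize (Hbx x Hx).
    destruct (HN n Hn (commuting G x) (centralizer_subgroup G x)) as [Hlow _]. lra. }
  assert (delta * delta >= 0) by nra.
  assert ((a - delta) * (b - delta) <= mass (M n) Gam * (b - delta))
    by (apply Rmult_le_compat_r; lra).
  nra.
Qed.

End UniformSequence.

Lemma inv_sq_le_mul_div (m d g : R) :
  0 <= m -> 0 < d -> 1 <= m * g -> 1 / (m ^ 2 * d) <= g * (g / d).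
Proof.
  intros Hm Hd Hmg.
  assert (Hm0 : 0 < m) by (destruct Hm as [|<-]; [assumption|lra]).
  apply (Rmult_le_reg_l (m ^ 2 * d)); [apply Rmult_lt_0_compat; [apply pow_lt|]; assumption|].
  replace (m ^ 2 * d * (1 / (m ^ 2 * d))) with 1 by (field; lra).
  replace (m ^ 2 * d * (g * (g / d))) with ((m * g) * (m * g)) by (field; lra).
  nra.
Qed.

Section LowerBounds.
Variables (G : group) (Gam H : G -> Prop) (m d : nat).
Hypotheses (HGam : is_subgroup G Gam) (Hidx : is_index G Gam m)
  (HH : is_subgroup G H) (Hcard : has_card G H d) (Hab : quotient_abelian G Gam H).

Let Hd : 0 < INR d.
Proof. apply lt_0_INR, (card_pos G H d HH Hcard). Qed.

Lemma dc_mean_lower_bound (mu : (G -> R) -> R) :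
  is_left_invariant_mean G mu -> 1 / (INR m ^ 2 * INR d) <= dc_mean G mu.
Proof.
  intro Hmu. pose proof (mean_submeasure G mu Hmu) as Hnu.
  pose proof Hmu as (_ & _ & Hpos & Hone & _).
  set (g := mu (ind Gam)).
  assert (Hg : 1 <= INR m * g).
  { rewrite <- Hone, <- ind_True. apply (submeasure_le_index G _ Hnu Gam m g Hidx).
    intro x. rewrite mean_lcoset by exact Hmu. apply Rle_refl. }
  assert (Hcx : forall x, Gam x -> g / INR d <= mu (ind (commuting G x))).
  { intros x Hx. apply (Rmult_le_reg_l (INR d)); [exact Hd|].
    replace (INR d * (g / INR d)) with g by (field; lra).
    apply (submeasure_le_centralizer G _ Hnu Gam H d x); try assumption.
    intro y. rewrite mean_lcoset by exact Hmu. apply Rle_refl. }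
  assert (Hg0 : 0 <= g) by (apply Hpos; [apply ind_bounded|intro; apply ind_bounds]).
  eapply Rle_trans; [apply (inv_sq_le_mul_div (INR m) (INR d) g (pos_INR m) Hd Hg)|].
  apply (dc_mean_ge_mul G mu Hmu Gam); [apply Rdiv_le_0_compat; assumption|exact Hcx].
Qed.

Lemma dc_seq_lower_bound (M : nat -> G -> R) :
  (forall n, is_prob_measure (M n)) -> measures_index_uniformly G M ->
  Rbar_le (1 / (INR m ^ 2 * INR d)) (dc_seq G M).
Proof.
  intros HM HU. set (g := inv_index G Gam).
  assert (Hnu : forall n, is_submeasure (mass (M n)))
    by (intro n; apply mass_submeasure, prob_sums_le1, HM).
  assert (Hg : 1 <= INR m * g).
  { apply (le_mul_inv_index G M HM HU Gam (fun _ => True)); [exact HGam| |].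
    - intros n c. apply (submeasure_le_index G _ (Hnu n) Gam m c Hidx).
    - intros e He. exists O. intros n _. rewrite prob_mass_total by apply HM. lra. }
  assert (Hcx : forall x, Gam x -> g / INR d <= inv_index G (commuting G x)).
  { intros x Hx. apply (Rmult_le_reg_l (INR d)); [exact Hd|].
    replace (INR d * (g / INR d)) with g by (field; lra).
    apply (le_mul_inv_index G M HM HU (commuting G x) Gam); [apply centralizer_subgroup| |].
    - intros n c. apply (submeasure_le_centralizer G _ (Hnu n) Gam H d x c); assumption.
    - intros e He. destruct (mass_near_inv_index G M HM HU e He) as [N HN].
      exists N. intros n Hn. destruct (HN n Hn Gam HGam) as [Hlow _]. unfold g. lra. }
  assert (Hg0 : 0 < g) by (pose proof (pos_INR m); nra).
  eapply Rbar_le_trans; [|apply (dc_seq_ge_mul G M HM HU Gam g (g / INR d)); try assumption].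
  - apply (inv_sq_le_mul_div (INR m) (INR d) g (pos_INR m) Hd Hg).
  - lra.
  - apply Rdiv_lt_0_compat; assumption.
  - apply Rle_refl.
Qed.

End LowerBounds.

Theorem proposition1p17 (G : group) (Gam H : G -> Prop) (m d : nat) :
  countable_group G ->
  is_subgroup G Gam -> is_index G Gam m ->
  normal_in G H Gam -> has_card G H d ->
  quotient_abelian G Gam H ->
  (forall mu : (G -> R) -> R, is_left_invariant_mean G mu ->
     dc_mean G mu >= 1 / (INR m ^ 2 * INR d)) /\
  (finitely_generated G ->
   forall M : nat -> G -> R,
     (forall n, is_prob_measure (M n)) ->
     measures_index_uniformly G M ->
     Rbar_le (Finite (1 / (INR m ^ 2 * INR d))) (dc_seq G M)).
Proof.
  intros _ HGam Hidx [HH _] Hcard Hab. split.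
  - intros mu Hmu. apply Rle_ge, (dc_mean_lower_bound G Gam H m d); assumption.
  - intros _ M HM HU. apply (dc_seq_lower_bound G Gam H m d); assumption.
Qed.
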